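(* Let $\mathcal{H}_o=(V,\vec H,\bm{w})$ be a strongly connected weighted oriented hypergraph with $|V|\ge2$. For all distinct $u,v\in V$ and all $\alpha\in[0,1)$, $$\frac{\kappa_\alpha(u,v)}{1-\alpha}\le\frac{2\max_{h\in\vec H}w_h}{d(u,v)}.$$
   Context: A weighted oriented hypergraph $(V,\vec H,\bm w)$ has a finite vertex set $V$, a finite set $\vec H$ of hyperedges, each an ordered pair $h=(A_h,B_h)$ of nonempty subsets of $V$ with $A_h\cap B_h=\emptyset$, such that for every $h\in\vec H$ its reversal $h^-=(B_h,A_h)$ also belongs to $\vec H$, and positive weights with $w_h=w_{h^-}$. A directed path from $u$ to $v$ is a sequence of hyperedges $h_1,\dots,h_l$ with $u\in A_{h_1}$, $v\in B_{h_l}$, $B_{h_j}\cap A_{h_{j+1}}\ne\emptyset$; strongly connected means such a path exists for all distinct $u,v$. $d(u,v)=\inf_\gamma\sum_{h\in\gamma}w_h$ over directed paths from $u$ to $v$ ($u\ne v$), $d(u,u)=0$. $\Gamma(v)=\{z:\exists h\in\vec H\text{ with }v\in A_h,z\in B_h\}$. For $\alpha\in[0,1]$: $\mu^\alpha_{u^{in}}(u)=\alpha$, $\mu^\alpha_{u^{in}}(z)=(1-\alpha)\sum_{h':u\in B_{h'},z\in A_{h'}}\frac{1}{|A_{h'}|}\frac{w_{h'}}{\sum_{h'':u\in B_{h''}}w_{h''}}$ for $z\in\Gamma(u)$, $0$ otherwise; $\mu^\alpha_{v^{out}}(v)=\alpha$, $\mu^\alpha_{v^{out}}(z)=(1-\alpha)\sum_{h':v\in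 A_{h'},z\in B_{h'}}\frac{1}{|B_{h'}|}\frac{w_{h'}}{\sum_{h'':v\in A_{h''}}w_{h''}}$ for $z\in\Gamma(v)$, $0$ otherwise. $W(\mu,\nu)=\inf_\pi\sum_{x,y}\pi(x,y)d(x,y)$ over couplings $\pi$ of $\mu,\nu$. For distinct $u,v$: $\kappa_\alpha(u,v)=1-W(\mu^\alpha_{u^{in}},\mu^\alpha_{v^{out}})/d(u,v)$. *)

From HB Require Import structures.
From mathcomp Require Import all_boot all_order all_algebra.
From mathcomp Require Import reals.
Set Implicit Arguments. Unset Strict Implicit. Unset Printing Implicit Defensive.
Import Order.TTheory GRing.Theory Num.Theory.
Local Open Scope ring_scope.


Section OrientedHypergraph.
Variables (R : realType) (V : finType).

Definition hedge := ({set V} * {set V})%type.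
Definition hA (h : hedge) : {set V} := h.1.
Definition hB (h : hedge) : {set V} := h.2.
Definition hrev (h : hedge) : hedge := (h.2, h.1).

Definition is_woh (H : {set hedge}) (w : hedge -> R) : Prop :=
  forall h, h \in H ->
    [/\ hA h != set0, hB h != set0, [disjoint hA h & hB h],
        hrev h \in H & (0 < w h /\ w (hrev h) = w h)].

Definition dpath (H : {set hedge}) (u v : V) (p : seq hedge) : Prop :=
  match p with
  | [::] => False
  | h1 :: _ =>
      [/\ all (fun h => h \in H) p, u \in hA h1, v \in hB (last h1 p)
        & forall j, (j.+1 < size p)%N ->
            hB (nth h1 p j) :&: hA (nth h1 p j.+1) != set0]
  end.

Definition strongly_connected (H : {set hedge}) : Prop :=
  forall u v : V, u != v -> exists p, dpath H u v p.

Definition path_weight (w : hedge -> R) (p : seq hedge) : R :=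
  \sum_(h <- p) w h.

Definition hdist (H : {set hedge}) (w : hedge -> R) (u v : V) : R :=
  if u == v then 0
  else reals.inf (fun x : R => exists p, dpath H u v p /\ x = path_weight w p).

Definition Gamma (H : {set hedge}) (v : V) : {set V} :=
  [set z | [exists h in H, (v \in hA h) && (z \in hB h)]].

Definition mu_in (H : {set hedge}) (w : hedge -> R) (alpha : R) (u z : V) : R :=
  if z == u then alpha
  else if z \in Gamma H u then
    (1 - alpha) * \sum_(h in H | (u \in hB h) && (z \in hA h))
        ((#|hA h|%:R)^-1 * (w h / \sum_(h' in H | u \in hB h') w h'))
  else 0.

Definition mu_out (H : {set hedge}) (w : hedge -> R) (alpha : R) (v z : V) : R :=
  if z == v then alpha
  else if z \in Gamma H v then
    (1 - alpha) * \sum_(h in H | (v \in hA h) && (z \in hB h))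
        ((#|hB h|%:R)^-1 * (w h / \sum_(h' in H | v \in hA h') w h'))
  else 0.

Definition coupling (mu nu : V -> R) (pi : V -> V -> R) : Prop :=
  [/\ forall x y, 0 <= pi x y,
      forall x, \sum_y pi x y = mu x
    & forall y, \sum_x pi x y = nu y].

Definition wasserstein (H : {set hedge}) (w : hedge -> R) (mu nu : V -> R) : R :=
  reals.inf (fun c : R => exists pi, coupling mu nu pi /\
         c = \sum_x \sum_y pi x y * hdist H w x y).

Definition kappa (H : {set hedge}) (w : hedge -> R) (alpha : R) (u v : V) : R :=
  1 - wasserstein H w (mu_in H w alpha u) (mu_out H w alpha v) / hdist H w u v.

Definition max_weight (H : {set hedge}) (w : hedge -> R) : R :=
  \big[Num.max/0]_(h in H) w h.

End OrientedHypergraph.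

From HB Require Import structures.
From mathcomp Require Import all_boot all_order all_algebra.
From mathcomp Require Import reals.
From mathcomp Require classical_sets.
From mathcomp Require Import ring lra.
Import Order.TTheory GRing.Theory Num.Theory.
Local Open Scope ring_scope.
Set Implicit Arguments. Unset Strict Implicit. Unset Printing Implicit Defensive.

(* Every transport plan between mu_in(u) and mu_out(v) is charged at least
   d(u,v) minus the mean distance of mu_in(u) from u and of mu_out(v) to v,
   by the triangle inequality d(u,v) <= d(u,x) + d(x,y) + d(y,v).  Both
   measures keep mass alpha at their centre and spread the remaining 1 - alpha
   over neighbours reached by a single hyperedge, hence at distance at most
   max_h w_h.  So W >= d(u,v) - 2 (1 - alpha) max_h w_h, which rearranges to
   the bound on kappa. *)

Lemma sum_uniform_split (R : numFieldType) (I V : finType) (b : I -> {set V})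
    (P : pred I) (f : I -> R) :
  (forall i, P i -> b i != set0) ->
  \sum_z \sum_(i | P i && (z \in b i)) (#|b i|%:R)^-1 * f i = \sum_(i | P i) f i.
Proof.
move=> b_neq0; under eq_bigr do rewrite big_mkcondr /=.
rewrite exchange_big; apply: eq_bigr => i Pi.
rewrite -big_mkcond /= sumr_const -mulrnAl -mulr_natr mulVf ?mul1r //.
by rewrite pnatr_eq0 -lt0n card_gt0 b_neq0.
Qed.

Lemma weighted_sum_le_off_atom (R : realDomainType) (V : finType)
    (mu f : V -> R) (u : V) (K : R) :
  (forall x, 0 <= mu x) -> \sum_x mu x = 1 -> f u = 0 ->
  (forall x, x != u -> mu x != 0 -> f x <= K) ->
  \sum_x mu x * f x <= (1 - mu u) * K.
Proof.
move=> mu_ge0 mu_sum1 fu0 f_le; rewrite (bigD1 u) //= fu0 mulr0 add0r.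
have <- : \sum_(x | x != u) mu x = 1 - mu u.
  by rewrite -mu_sum1 [in RHS](bigD1 u) //= addrC addrK.
rewrite mulr_suml; apply: ler_sum => x x_neq_u.
have [->|mux_neq0] := eqVneq (mu x) 0; first by rewrite !mul0r.
by rewrite ler_wpM2l ?f_le.
Qed.

Lemma coupling_cost_ge (R : realType) (V : finType) (d : V -> V -> R)
    (mu nu : V -> R) (pi : V -> V -> R) (u v : V) :
  (forall x y z, d x z <= d x y + d y z) -> \sum_x mu x = 1 ->
  coupling mu nu pi ->
  d u v - \sum_x mu x * d u x - \sum_y nu y * d y v
    <= \sum_x \sum_y pi x y * d x y.
Proof.
move=> d_tri mu_sum1 [pi_ge0 pi_row pi_col].
have row_sum (g : V -> R) : \sum_x \sum_y pi x y * g x = \sum_x mu x * g x.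
  by apply: eq_bigr => x _; rewrite -mulr_suml pi_row.
have col_sum (g : V -> R) : \sum_x \sum_y pi x y * g y = \sum_y nu y * g y.
  by rewrite exchange_big; apply: eq_bigr => y _; rewrite -mulr_suml pi_col.
have -> : d u v - \sum_x mu x * d u x - \sum_y nu y * d y v
    = \sum_x \sum_y pi x y * (d u v - d u x - d y v).
  apply/esym; under eq_bigr do under eq_bigr do rewrite !mulrBr.
  under eq_bigr do rewrite !sumrB.
  by rewrite !sumrB !row_sum col_sum -mulr_suml mu_sum1 mul1r.
apply: ler_sum => x _; apply: ler_sum => y _; rewrite ler_wpM2l //.
by have := d_tri u x v; have := d_tri x y v; lra.
Qed.

Lemma hrevK (V : finType) : involutive (@hrev V).
Proof. by case. Qed.

Section WeightedOrientedHypergraph.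
Variables (R : realType) (V : finType) (H : {set hedge V}) (w : hedge V -> R).
Hypothesis woh : is_woh H w.

Lemma weight_gt0 h : h \in H -> 0 < w h.
Proof. by case/woh=> _ _ _ _ []. Qed.

Lemma le_max_weight h : h \in H -> w h <= max_weight H w.
Proof. exact: le_bigmax_cond. Qed.

Definition min_weight := \big[Num.min/1]_(h in H) w h.

Lemma min_weight_gt0 : 0 < min_weight.
Proof. exact: lt_bigmin weight_gt0. Qed.

Lemma min_weight_le h : h \in H -> min_weight <= w h.
Proof. exact: bigmin_le_cond. Qed.

Definition adjacent (h k : hedge V) := hB h :&: hA k != set0.

Lemma dpath_cons u v h p :
  dpath H u v (h :: p) <->
  [/\ all [in H] (h :: p), u \in hA h, v \in hB (last h p) & path adjacent h p].
Proof.
split=> [[inH uA vB adj]|[inH uA vB /(pathP h) adj]]; split=> //.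
by apply/(pathP h) => i ip; exact: adj.
Qed.

Lemma dpath_cat x y z p q :
  dpath H x y p -> dpath H y z q -> dpath H x z (p ++ q).
Proof.
case: p q => [|h p] [|k q] //; rewrite !dpath_cons.
move=> [inHp xA yB adjp] [inHq yA zB adjq].
split=> //; first by rewrite -cat_cons all_cat inHp inHq.
  by rewrite last_cat.
rewrite cat_path adjp /= adjq andbT.
by apply/set0Pn; exists y; rewrite inE yB.
Qed.

Lemma path_weight_ge0 p : all [in H] p -> 0 <= path_weight w p.
Proof.
move=> /allP inH; rewrite /path_weight big_seq sumr_ge0 // => h /inH.
by move=> /weight_gt0 /ltW.
Qed.

Lemma min_weight_le_path_weight x y p :
  dpath H x y p -> min_weight <= path_weight w p.
Proof.
case: p => [//|h p] /dpath_cons [/= /andP [hH inH] _ _ _].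
rewrite /path_weight big_cons -[min_weight]addr0 lerD ?min_weight_le //.
exact: path_weight_ge0.
Qed.

Definition path_weights x y : R -> Prop :=
  fun c => exists p, dpath H x y p /\ c = path_weight w p.

Lemma hdistE x y : x != y -> hdist H w x y = inf (path_weights x y).
Proof. by rewrite /hdist => /negbTE ->. Qed.

Lemma hdist_le_path x y p : dpath H x y p -> hdist H w x y <= path_weight w p.
Proof.
move=> xyp; have inH : all [in H] p by case: p xyp => [//|h p] [].
have [<-|xy] := eqVneq x y; first by rewrite /hdist eqxx path_weight_ge0.
rewrite hdistE //; apply: ge_inf; last by exists p.
by exists 0 => _ [q [xyq ->]]; case: q xyq => [//|h q] [/path_weight_ge0].
Qed.

Lemma hdist_le_edge h x y :
  h \in H -> x \in hA h -> y \in hB h -> hdist H w x y <= w h.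
Proof.
move=> hH xA yB; have -> : w h = path_weight w [:: h] by rewrite /path_weight big_seq1.
by apply: hdist_le_path; split=> //=; rewrite hH.
Qed.

Hypothesis connected : strongly_connected H.

Lemma path_weights_neq0 x y : x != y -> classical_sets.nonempty (path_weights x y).
Proof. by move=> /connected [p xyp]; exists (path_weight w p), p. Qed.

Lemma min_weight_le_hdist x y : x != y -> min_weight <= hdist H w x y.
Proof.
move=> xy; rewrite hdistE //; apply: lb_le_inf; first exact: path_weights_neq0.
by move=> _ [p [xyp ->]]; exact: min_weight_le_path_weight xyp.
Qed.

Lemma hdist_ge0 x y : 0 <= hdist H w x y.
Proof.
have [<-|xy] := eqVneq x y; first by rewrite /hdist eqxx.
exact: le_trans (ltW min_weight_gt0) (min_weight_le_hdist xy).
Qed.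

Lemma hdist_triangle x y z : hdist H w x z <= hdist H w x y + hdist H w y z.
Proof.
have [<-|xz] := eqVneq x z; first by rewrite {1}/hdist eqxx addr_ge0 ?hdist_ge0.
have [<-|xy] := eqVneq x y; first by rewrite {2}/hdist eqxx add0r.
have [<-|yz] := eqVneq y z; first by rewrite {3}/hdist eqxx addr0.
rewrite -lerBlDr [hdist H w x y]hdistE //.
apply: lb_le_inf; first exact: path_weights_neq0.
move=> _ [p [xyp ->]]; rewrite lerBlDr addrC -lerBlDr [hdist H w y z]hdistE //.
apply: lb_le_inf; first exact: path_weights_neq0.
move=> _ [q [yzq ->]]; rewrite lerBlDr addrC /path_weight -big_cat.
exact/hdist_le_path/(dpath_cat xyp yzq).
Qed.

Lemma exists_out_edge u : (1 < #|V|)%N -> exists2 h, h \in H & u \in hA h.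
Proof.
move=> V_gt1; have [x] : exists x, x \in predC1 u.
  by apply/card_gt0P; rewrite cardC1; case: #|V| V_gt1.
rewrite inE eq_sym => /connected [[|h p] //] /dpath_cons [/= /andP [hH _] uA _ _].
by exists h.
Qed.

Lemma mem_hrev h : (hrev h \in H) = (h \in H).
Proof. by apply/idP/idP=> [/woh [_ _ _]|/woh []//]; rewrite hrevK. Qed.

Lemma weight_hrev h : h \in H -> w (hrev h) = w h.
Proof. by case/woh=> _ _ _ _ []. Qed.

(* Reversal is a weight-preserving involution of H exchanging tails and heads,
   so the in- and out-distributions coincide. *)
Lemma mu_in_eq_mu_out alpha u : mu_in H w alpha u =1 mu_out H w alpha u.
Proof.
have rev_sum (P : pred (hedge V)) (F : hedge V -> R) :
    \sum_(h in H | P (hrev h)) F (hrev h) = \sum_(h in H | P h) F h.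
  rewrite (reindex_inj (can_inj (@hrevK V))).
  by apply: eq_big => h; rewrite hrevK ?mem_hrev.
have S_rev : \sum_(h in H | u \in hB h) w h = \sum_(h in H | u \in hA h) w h.
  rewrite -(rev_sum (fun h => u \in hA h)).
  by apply: eq_bigr => h /andP [hH _]; rewrite weight_hrev.
move=> z; rewrite /mu_in /mu_out; case: ifP => // _; case: ifP => // _.
rewrite -(rev_sum (fun h => (u \in hA h) && (z \in hB h))) S_rev.
by congr (_ * _); apply: eq_bigr => h /andP [hH _]; rewrite weight_hrev.
Qed.

Lemma mu_out_ge0 alpha v z : 0 <= alpha <= 1 -> 0 <= mu_out H w alpha v z.
Proof.
move=> /andP [alpha_ge0 alpha_le1]; rewrite /mu_out; case: ifP => // _.
case: ifP => // _; rewrite mulr_ge0 ?subr_ge0 // sumr_ge0 // => h /andP [hH _].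
rewrite mulr_ge0 ?invr_ge0 ?ler0n ?divr_ge0 ?sumr_ge0 ?ltW ?weight_gt0 //.
by move=> h' /andP [h'H _]; rewrite ltW ?weight_gt0.
Qed.

Lemma mu_out_offE alpha v z : z != v ->
  mu_out H w alpha v z = (1 - alpha) *
    \sum_(h in H | (v \in hA h) && (z \in hB h))
      ((#|hB h|%:R)^-1 * (w h / \sum_(h' in H | v \in hA h') w h')).
Proof.
move=> /negbTE zv; rewrite /mu_out zv; case: ifP => // zN.
rewrite big_pred0 ?mulr0 // => h; apply/negbTE; apply: contraFN zN.
by move=> /andP [hH vAzB]; rewrite inE; apply/existsP; exists h; rewrite hH.
Qed.

Lemma sum_mu_out alpha v : (1 < #|V|)%N -> \sum_z mu_out H w alpha v z = 1.
Proof.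
move=> V_gt1; set S := \sum_(h in H | v \in hA h) w h.
have S_gt0 : 0 < S.
  have [h hH vA] := exists_out_edge v V_gt1.
  rewrite /S (bigD1 h) /=; last by rewrite hH.
  rewrite ltr_pwDl ?weight_gt0 // sumr_ge0 // => k /andP [/andP [kH _] _].
  exact/ltW/weight_gt0.
have no_loop : \sum_(h in H | (v \in hA h) && (v \in hB h)) (#|hB h|%:R)^-1 * (w h / S) = 0.
  rewrite big_pred0 // => h; apply/negbTE/andP => -[/woh [_ _ AB _ _]].
  by move=> /andP [vA vB]; move: AB => /disjointFr /(_ vA); rewrite vB.
rewrite (bigD1 v) //= {1}/mu_out eqxx.
under eq_bigr => z zv do rewrite mu_out_offE //.
rewrite -mulr_sumr [\sum_(z | z != v) _](_ : _ = \sum_z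
    \sum_(h in H | (v \in hA h) && (z \in hB h)) (#|hB h|%:R)^-1 * (w h / S)).
  2: by rewrite [RHS](bigD1 v) //= no_loop add0r.
under eq_bigr do rewrite (eq_bigl _ _ (fun h => andbA _ _ _)).
rewrite sum_uniform_split => [|h /andP [/woh [] //]].
by rewrite -mulr_suml divff ?gt_eqF // mulr1 addrC subrK.
Qed.

Lemma hdist_le_max_weight_out v z : z \in Gamma H v -> hdist H w v z <= max_weight H w.
Proof.
rewrite inE => /existsP [h /and3P [hH vA zB]].
exact: le_trans (hdist_le_edge hH vA zB) (le_max_weight hH).
Qed.

Lemma hdist_le_max_weight_in v z : z \in Gamma H v -> hdist H w z v <= max_weight H w.
Proof.
rewrite inE => /existsP [h /and3P [hH vA zB]].
rewrite -mem_hrev in hH; apply: le_trans (hdist_le_edge hH zB vA) _.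
by rewrite weight_hrev ?le_max_weight // -mem_hrev.
Qed.

Lemma mu_out_support alpha v z :
  z != v -> mu_out H w alpha v z != 0 -> z \in Gamma H v.
Proof. by rewrite /mu_out => /negbTE ->; case: ifP; rewrite ?eqxx. Qed.

Lemma wasserstein_ge u v alpha : (1 < #|V|)%N -> 0 <= alpha <= 1 ->
  hdist H w u v - 2 * ((1 - alpha) * max_weight H w)
    <= wasserstein H w (mu_in H w alpha u) (mu_out H w alpha v).
Proof.
move=> V_gt1 alpha01; set mu := mu_in H w alpha u; set nu := mu_out H w alpha v.
have mu_ge0 x : 0 <= mu x by rewrite /mu mu_in_eq_mu_out mu_out_ge0.
have nu_ge0 y : 0 <= nu y by rewrite mu_out_ge0.
have sum_mu : \sum_x mu x = 1.
  by under eq_bigr do rewrite /mu mu_in_eq_mu_out; rewrite sum_mu_out.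
have sum_nu : \sum_y nu y = 1 by rewrite sum_mu_out.
apply: lb_le_inf.
  exists (\sum_x \sum_y (mu x * nu y) * hdist H w x y), (fun x y => mu x * nu y).
  split=> //; split=> [x y|x|y]; first by rewrite mulr_ge0.
  - by rewrite -mulr_sumr sum_nu mulr1.
  - by rewrite -mulr_suml sum_mu mul1r.
move=> _ [pi [pi_coupling ->]].
apply: le_trans (coupling_cost_ge u v hdist_triangle sum_mu pi_coupling).
have mean_mu : \sum_x mu x * hdist H w u x <= (1 - alpha) * max_weight H w.
  have -> : alpha = mu u by rewrite /mu /mu_in eqxx.
  apply: weighted_sum_le_off_atom; rewrite /hdist ?eqxx // => x xu.
  rewrite /mu mu_in_eq_mu_out -/(hdist H w u x).
  by move/(mu_out_support xu)/hdist_le_max_weight_out.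
have mean_nu : \sum_y nu y * hdist H w y v <= (1 - alpha) * max_weight H w.
  have -> : alpha = nu v by rewrite /nu /mu_out eqxx.
  apply: weighted_sum_le_off_atom; rewrite /hdist ?eqxx // => y yv.
  rewrite -/(hdist H w y v).
  by move/(mu_out_support yv)/hdist_le_max_weight_in.
lra.
Qed.

End WeightedOrientedHypergraph.

Theorem mainTheorem7 (R : realType) (V : finType)
    (H : {set hedge V}) (w : hedge V -> R) :
  is_woh H w -> strongly_connected H -> (2 <= #|V|)%N ->
  forall (u v : V) (alpha : R), u != v -> 0 <= alpha -> alpha < 1 ->
  kappa H w alpha u v / (1 - alpha) <= 2 * max_weight H w / hdist H w u v.
Proof.
move=> woh connected V_gt1 u v alpha uv alpha_ge0 alpha_lt1.
have d_gt0 : 0 < hdist H w u v.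
  exact: lt_le_trans (min_weight_gt0 woh) (min_weight_le_hdist woh connected uv).
have alpha01 : 0 <= alpha <= 1 by rewrite alpha_ge0 ltW.
have := wasserstein_ge woh connected u v V_gt1 alpha01.
move: d_gt0; rewrite /kappa; set W := wasserstein _ _ _ _.
set d := hdist H w u v; set M := max_weight H w => d_gt0 W_ge.
rewrite ler_pdivrMr ?subr_gt0 //.
have -> : 1 - W / d = (d - W) / d by rewrite mulrBl divff ?gt_eqF.
have -> : 2 * M / d * (1 - alpha) = 2 * ((1 - alpha) * M) / d by ring.
by rewrite ler_pM2r ?invr_gt0 //; lra.
Qed.
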